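(* Let $n\geqslant 3$ and $k=n/2$. For a vertex $\pi$ of $P_n$ with $\pi_1=i$ and $\pi_n=j$ (so $i\neq j$), define $$f(\pi)=\begin{cases} i-j, & i>j,\\ n+i-j, & i<j,\end{cases}$$ and $$c(\pi)=f(\pi)+\varepsilon(\pi),$$ where $$\varepsilon(\pi)=\begin{cases} +1, & j>k \text{ and } f(\pi)=k,\\ -1, & j>k \text{ and } f(\pi)=k+1,\\ 0, & \text{otherwise}.\end{cases}$$ (For $n$ odd, $\varepsilon\equiv 0$.) Then $c$ is a proper vertex coloring of $P_n$ with values in $\{1,\ldots,n-1\}$. Moreover, it is equitable: each of the $n-1$ color classes has exactly $n\,(n-2)!$ vertices.
   Context: For $n\geqslant 1$, the Pancake graph $P_n$ is the Cayley graph on the symmetric group $\mathrm{Sym}_n$, with permutations written in one-line notation $\pi=[\pi_1\pi_2\ldots\pi_n]$. Its generating set consists of the prefix-reversals $r_i$, $2\leqslant i\leqslant n$. Multiplying $\pi$ on the right by $r_i$ reverses the first $i$ entries: $\pi r_i=[\pi_i\pi_{i-1}\ldots\pi_1\pi_{i+1}\ldots\pi_n]$. Two vertices $\pi,\sigma$ are adjacent iff $\sigma=\pi r_i$ for some $2\leqslant i\leqslant n$. A proper coloring is equitable if the sizes of any two color classes differ by at most one. *)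

From mathcomp Require Import all_boot all_fingroup.
Set Implicit Arguments. Unset Strict Implicit. Unset Printing Implicit Defensive.

(* Vertices of the Pancake graph P_n: permutations of {1..n}, represented as
   {perm 'I_n} (values 0..n-1, shifted by one in the one-line notation). *)

Definition oneline (n : nat) (p : {perm 'I_n}) : seq nat :=
  [seq (val (p x)).+1 | x <- enum 'I_n].

Definition pfirst (n : nat) (p : {perm 'I_n}) : nat := nth 0 (oneline p) 0.
Definition plast (n : nat) (p : {perm 'I_n}) : nat := nth 0 (oneline p) n.-1.

Definition pancake_adj (n : nat) (p q : {perm 'I_n}) : Prop :=
  exists i, 2 <= i <= n /\
    oneline q = rev (take i (oneline p)) ++ drop i (oneline p).

Definition fcol (n : nat) (p : {perm 'I_n}) : nat :=
  let i := pfirst p in let j := plast p in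
  if j < i then i - j else n + i - j.

(* c(pi) = f(pi) + eps(pi), with k = n/2 (possibly a half-integer):
   "j > k" is 2j > n, "f = k" is 2f = n, "f = k+1" is 2f = n+2. *)
Definition pcolor (n : nat) (p : {perm 'I_n}) : nat :=
  let j := plast p in let f := fcol p in
  if n < 2 * j then
    (if 2 * f == n then f + 1 else if 2 * f == n + 2 then f - 1 else f)
  else f.

From mathcomp Require Import all_boot all_fingroup.
From mathcomp Require Import zify.

Set Implicit Arguments.
Unset Strict Implicit.
Unset Printing Implicit Defensive.

(* The colour c(pi) depends only on the two end values i = pi_1 and j = pi_n,
   through an explicit function  colour n i j.  The proof has three parts.
   1. Arithmetic of  colour  (a finite case analysis on the comparisons of
      i, j, n/2 and f): for fixed j the map i |-> colour n i j is injective on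
      {1..n} \ {j} and onto {1..n-1}; exchanging i and j changes the colour;
      colours lie in {1..n-1}.
   2. Counting permutations of a finite type T by the images of two distinct
      points x0, x1: every pair of distinct values (a, b) is attained by the
      same number (#|T| - 2)! of permutations, so a set defined by a relation
      P (p x0) (p x1) has \sum_b #|{a <> b | P a b}| * (#|T| - 2)! elements.
   3. Pancake graph: a prefix reversal either fixes pi_n and changes pi_1, or
      (reversal of the whole word) exchanges pi_1 and pi_n.  Properness then
      follows from part 1, and equitability from parts 1 and 2 applied to
      T = 'I_n, x0 = first position, x1 = last position, since every b has
      exactly one partner a of each colour. *)

Definition colour (n i j : nat) : nat :=
  let f := if j < i then i - j else n + i - j in
  if n < 2 * j then
    (if 2 * f == n then f + 1 else if 2 * f == n + 2 then f - 1 else f)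
  else f.

Lemma pcolorE (n : nat) (p : {perm 'I_n}) :
  pcolor p = colour n (pfirst p) (plast p).
Proof. by []. Qed.

Section ColourArithmetic.

Variable n : nat.
Hypothesis n_ge3 : 3 <= n.

Lemma colour_inj_first (i1 i2 j : nat) :
  1 <= i1 <= n -> 1 <= i2 <= n -> 1 <= j <= n ->
  i1 != j -> i2 != j -> i1 != i2 -> colour n i1 j != colour n i2 j.
Proof. by rewrite /colour; do ! case: ifP; lia. Qed.

Lemma colour_swap (i j : nat) : 1 <= i <= n -> 1 <= j <= n ->
  i != j -> colour n i j != colour n j i.
Proof. by rewrite /colour; do ! case: ifP; lia. Qed.

Lemma colour_range (i j : nat) : 1 <= i <= n -> 1 <= j <= n ->
  i != j -> 1 <= colour n i j <= n - 1.
Proof. by rewrite /colour; do ! case: ifP; lia. Qed.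

(* Every colour is realised with any prescribed last entry j: undo the
   correction eps to get the value f, and take i = j + f modulo n. *)
Lemma colour_onto (j col : nat) : 1 <= j <= n -> 1 <= col <= n - 1 ->
  exists2 i, 1 <= i <= n & (i != j) && (colour n i j == col).
Proof.
move=> hj hcol.
pose f := if (n < 2 * j) && (2 * col == n + 2) then col - 1
          else if (n < 2 * j) && (2 * col == n) then col + 1 else col.
exists (if j + f <= n then j + f else j + f - n);
  by rewrite /f /colour; do ! case: ifP; lia.
Qed.

End ColourArithmetic.

Section EndsCounting.

Variables (T : finType) (x0 x1 : T).
Hypothesis x01 : x0 != x1.

Definition fibre (u : T * T) : {set {perm T}} :=
  [set p : {perm T} | (p x0, p x1) == u].

(* Post-composing with a permutation mapping (a, b) to (a', b') embeds the
   fibre of (a, b) into the fibre of (a', b'). *)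
Lemma card_fibre_le (a b a' b' : T) : a != b -> a' != b' ->
  #|fibre (a, b)| <= #|fibre (a', b')|.
Proof.
move=> hab hab'.
pose s : {perm T} := (tperm a a' * tperm (tperm a a' b) b')%g.
have sb_ne : tperm a a' b != a'.
  by rewrite -{2}(tpermL a a') (inj_eq perm_inj) eq_sym.
rewrite -(card_imset _ (mulIg s)); apply: subset_leq_card.
apply/subsetP => q /imsetP [p]; rewrite inE => /eqP [pa pb] ->.
by rewrite inE !permM pa pb tpermL tpermL (tpermD sb_ne) ?(eq_sym b').
Qed.

Definition fixing_ends_count : nat := #|fibre (x0, x1)|.

Lemma card_fibre (u : T * T) :
  #|fibre u| = if u.1 != u.2 then fixing_ends_count else 0.
Proof.
case: u => a b /=; case: ifPn => [hab | /negbNE /eqP <-].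
  by apply/eqP; rewrite eqn_leq !card_fibre_le.
apply/eqP; rewrite cards_eq0; apply/eqP/setP => p; rewrite !inE.
by apply/negbTE; apply: contra x01 => /eqP [<-] /perm_inj ->.
Qed.

Lemma card_ends_rel (P : rel T) :
  #|[set p : {perm T} | P (p x0) (p x1)]| =
  \sum_b #|[set a | (a != b) && P a b]| * fixing_ends_count.
Proof.
rewrite -sum1_card (partition_big (fun p : {perm T} => (p x0, p x1)) predT) //=.
have fibreP (u : T * T) :
  \sum_(p in [set p : {perm T} | P (p x0) (p x1)] | (p x0, p x1) == u) 1 =
  if (u.1 != u.2) && P u.1 u.2 then fixing_ends_count else 0.
  rewrite sum1_card; case: u => a b /=.
  case: (boolP (P a b)) => Pab; rewrite ?andbT ?andbF.
    rewrite -(card_fibre (a, b)); apply: eq_card => p.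
    rewrite [in RHS]inE [in LHS]unfold_in /= inE.
    by case: eqP => [[-> ->] | _]; rewrite ?Pab ?andbF.
  apply: eq_card0 => p; rewrite unfold_in /= inE.
  by case: eqP => [[-> ->] | _]; rewrite ?(negbTE Pab) ?andbF.
rewrite (eq_bigr _ (fun u _ => fibreP u)).
rewrite -(pair_bigA _ (fun a b => if (a != b) && P a b then fixing_ends_count else 0)).
rewrite exchange_big /=.
by apply: eq_bigr => b _; rewrite -big_mkcond sum_nat_cond_const.
Qed.

(* Each pair of distinct values is the image of (x0, x1) under exactly
   (#|T| - 2)! permutations: apply the previous lemma to the relation true
   and compare with #|{perm T}| = #|T|!. *)
Lemma fixing_ends_countE : fixing_ends_count = (#|T| - 2)`!.
Proof.
have two_le : 1 < #|T| by apply/card_gt1P; exists x0, x1.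
have card_all : #|[set p : {perm T} | true]| = #|T|`!.
  rewrite -cardsT -card_perm; apply: eq_card => p; rewrite inE.
  by apply/esym/subsetP => x; rewrite inE.
have card_ne (b : T) : #|[set a | (a != b) && true]| = #|T|.-1.
  by rewrite -(cardC1 b); apply: eq_card => a; rewrite !inE andbT.
move: (card_ends_rel (fun _ _ => true)).
rewrite card_all; under eq_bigr => b _ do rewrite card_ne.
rewrite sum_nat_const (_ : #|xpredT| = #|T|) //.
case: #|T| two_le => [|[|k]] // _; rewrite !factS !subSS subn0 /=.
by move/eqP; rewrite !eqn_pmul2l // => /eqP.
Qed.

End EndsCounting.

Section Pancake.

Variable m : nat.
Local Notation n := m.+1.

Lemma nth_oneline (p : {perm 'I_n}) (x : 'I_n) :
  nth 0 (oneline p) x = (p x).+1.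
Proof. by rewrite /oneline (nth_map x) ?size_enum_ord // nth_ord_enum. Qed.

Lemma pfirstE (p : {perm 'I_n}) : pfirst p = (p ord0).+1.
Proof. by rewrite /pfirst -(nth_oneline p ord0). Qed.

Lemma plastE (p : {perm 'I_n}) : plast p = (p ord_max).+1.
Proof. by rewrite /plast -(nth_oneline p ord_max). Qed.

Lemma ends_range (p : {perm 'I_n}) : 1 <= pfirst p <= n /\ 1 <= plast p <= n.
Proof. by rewrite pfirstE plastE !ltn_ord. Qed.

Hypothesis m_gt0 : 0 < m.

Lemma ord0_neq_max : (ord0 : 'I_n) != ord_max.
Proof. by rewrite -val_eqE /= eq_sym -lt0n. Qed.

Lemma pfirst_neq_plast (p : {perm 'I_n}) : pfirst p != plast p.
Proof. by rewrite pfirstE plastE eqSS val_eqE (inj_eq perm_inj) ord0_neq_max. Qed.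

(* A prefix reversal r_i with i < n fixes the last entry and brings the i-th
   entry to the front; r_n exchanges the first and last entries. *)
Lemma pancake_adj_cases (p q : {perm 'I_n}) : pancake_adj p q ->
  (plast q = plast p /\ pfirst q != pfirst p) \/
  (pfirst q = plast p /\ plast q = pfirst p).
Proof.
case=> i [/andP [i_ge2 i_le] q_def].
have size_p : size (oneline p) = n by rewrite size_map size_enum_ord.
have size_take_i : size (take i (oneline p)) = i.
  by rewrite size_take size_p; case: ltnP; lia.
have first_q : pfirst q = nth 0 (oneline p) i.-1.
  rewrite /pfirst q_def nth_cat size_rev size_take_i (_ : 0 < i); last lia.
  rewrite nth_rev size_take_i; last lia.
  by rewrite nth_take; [congr nth | ]; lia.
case: (ltnP i n) => [i_lt | i_ge].
- left; split.
    rewrite /plast q_def nth_cat size_rev size_take_i ltnNge (_ : i <= n.-1) //=.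
    by rewrite nth_drop; congr nth; lia.
  have i1_lt : i.-1 < n by lia.
  rewrite first_q (nth_oneline p (Ordinal i1_lt)) pfirstE eqSS val_eqE.
  by rewrite (inj_eq perm_inj) -val_eqE /=; lia.
- right; have i_n : i = n by lia.
  subst i.
  split; first by rewrite first_q plastE -(nth_oneline p ord_max).
  rewrite /plast q_def nth_cat size_rev size_take_i ltnSn nth_rev size_take_i //.
  by rewrite subnn nth_take // pfirstE -(nth_oneline p ord0).
Qed.

End Pancake.

Section PancakeColouring.

Variable m : nat.
Hypothesis m_ge2 : 1 < m.
Local Notation n := m.+1.

Let n_ge3 : 3 <= n. Proof. exact: m_ge2. Qed.
Let m_gt0 : 0 < m. Proof. exact: ltnW. Qed.

Lemma pcolor_proper (p q : {perm 'I_n}) :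
  pancake_adj p q -> pcolor p != pcolor q.
Proof.
move=> adj; have [p1 pn] := ends_range p; have [q1 qn] := ends_range q.
have p_ne := pfirst_neq_plast m_gt0 p; have q_ne := pfirst_neq_plast m_gt0 q.
rewrite !pcolorE.
case: (pancake_adj_cases m_gt0 adj) => [[last_eq first_ne] | [-> ->]].
- rewrite last_eq in q_ne *.
  by apply: colour_inj_first; rewrite // eq_sym.
- exact: colour_swap.
Qed.

Lemma pcolor_range (p : {perm 'I_n}) : 1 <= pcolor p <= n - 1.
Proof.
have [p1 pn] := ends_range p.
by rewrite pcolorE colour_range // pfirst_neq_plast.
Qed.

Lemma unique_first_of_colour (col : nat) (b : 'I_n) : 1 <= col <= n - 1 ->
  #|[set a : 'I_n | (a != b) && (colour n a.+1 b.+1 == col)]| = 1.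
Proof.
move=> col_range; have b_lt := ltn_ord b.
have [i i_range /andP [i_ne /eqP i_col]] :=
  colour_onto n_ge3 (j := b.+1) (ltac:(lia)) col_range.
have i1_lt : i.-1 < n by lia.
rewrite -(cards1 (Ordinal i1_lt)); apply: eq_card => a; rewrite !inE.
apply/idP/eqP => [/andP [a_ne /eqP a_col] | ->]; last first.
  by rewrite -val_eqE /= prednK ?i_ne ?i_col //; lia.
apply/val_inj/eqP; rewrite /= -eqSS prednK; last lia.
apply/contraT => a_ne_i; have a_lt := ltn_ord a.
have := colour_inj_first n_ge3 (i1 := a.+1) (j := b.+1)
  (ltac:(lia)) i_range (ltac:(lia)).
by rewrite a_col i_col eqxx; apply; rewrite // eqSS -val_eqE.
Qed.

Lemma card_colour_class (col : nat) : 1 <= col <= n - 1 ->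
  #|[set p : {perm 'I_n} | pcolor p == col]| = n * (n - 2)`!.
Proof.
move=> col_range.
have -> : [set p : {perm 'I_n} | pcolor p == col] =
          [set p : {perm 'I_n} | colour n (p ord0).+1 (p ord_max).+1 == col].
  by apply/setP => p; rewrite !inE pcolorE pfirstE plastE.
rewrite (card_ends_rel (ord0_neq_max m_gt0)
  (fun a b : 'I_n => colour n a.+1 b.+1 == col)).
under eq_bigr => b _ do rewrite unique_first_of_colour //.
by rewrite fixing_ends_countE ?ord0_neq_max // sum_nat_const card_ord mul1n.
Qed.

End PancakeColouring.

Theorem theorem3 (n : nat) (hn : 3 <= n) :
  (forall p q : {perm 'I_n}, pancake_adj p q -> pcolor p <> pcolor q) /\
  (forall p : {perm 'I_n}, 1 <= pcolor p <= n - 1) /\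
  (forall col, 1 <= col <= n - 1 ->
     #|[set p : {perm 'I_n} | pcolor p == col]| = n * (n - 2)`!).
Proof.
case: n hn => [|m] // m_ge2; split; [|split].
- by move=> p q adj; apply/eqP; exact: pcolor_proper adj.
- exact: pcolor_range.
- exact: card_colour_class.
Qed.
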